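(* Let $f\colon V_0\to\mathbb{R}$ be continuous such that $\Gamma_f$ is a ruled surface. Let $R_1,R_2$ be distinct rulings of $\Gamma_f$ intersecting at a point $p\in\mathbb{H}$, with $m(R_1)<m(R_2)$. Then for every $m\in[m(R_1),m(R_2)]$, the horizontal line $L_{p,m}$ is a ruling of $\Gamma_f$.
   Context: $\mathbb{H}$ is $\mathbb{R}^3$ with product $(x,y,z)\cdot(x',y',z')=(x+x',y+y',z+z'+\frac{xy'-yx'}{2})$; $X=(1,0,0)$, $Y=(0,1,0)$, $v^t=tv$. A horizontal line is $\{p\cdot tv\}$ with $v=(a,b,0)\ne0$, slope $b/a$; $L_{p,m}=\{p\cdot(X+mY)^t:t\in\mathbb{R}\}$ is the horizontal line of slope $m$ through $p$. A ruled surface is a union of horizontal line segments (rulings) with endpoints in its boundary (for entire $\Gamma_f$ the rulings are horizontal lines). $V_0=\{(x,0,z)\}$, $\Gamma_f=\{u\cdot Y^{f(u)}:u\in V_0\}$. $m(R)$ denotes the slope of a ruling $R$. *)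

From HB Require Import structures.
From mathcomp Require Import all_boot all_order all_algebra.
From mathcomp Require Import all_classical all_reals all_analysis.
Set Implicit Arguments. Unset Strict Implicit. Unset Printing Implicit Defensive.
Import Order.TTheory GRing.Theory Num.Theory.
Import numFieldNormedType.Exports.
Local Open Scope ring_scope.
Local Open Scope classical_set_scope.

Definition heis (R : realType) := (R * R * R)%type.

Definition hx {R : realType} (p : heis R) : R := p.1.1.
Definition hy {R : realType} (p : heis R) : R := p.1.2.
Definition hz {R : realType} (p : heis R) : R := p.2.

Definition hmul {R : realType} (p q : heis R) : heis R :=
  (hx p + hx q, hy p + hy q,
   hz p + hz q + (hx p * hy q - hy p * hx q) / 2).

Definition hdil {R : realType} (t : R) (v : heis R) : heis R :=
  (t * hx v, t * hy v, t * hz v).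

Definition hline {R : realType} (p : heis R) (a b : R) : set (heis R) :=
  [set q | exists t : R, q = hmul p (hdil t (a, b, 0))].

Definition is_horizontal_line {R : realType} (L : set (heis R)) : Prop :=
  exists (p : heis R) (a b : R), (a != 0 \/ b != 0) /\ L = hline p a b.

Definition Lpm {R : realType} (p : heis R) (m : R) : set (heis R) :=
  hline p 1 m.

Definition has_slope {R : realType} (L : set (heis R)) (m : R) : Prop :=
  exists (p : heis R) (a b : R), a != 0 /\ b / a = m /\ L = hline p a b.

(* V_0 = {(x,0,z)} is parametrized by (x,z) in R*R.
   Gamma_f = {u . Y^{f(u)} : u in V_0}. *)
Definition Gamma {R : realType} (f : R * R -> R) : set (heis R) :=
  [set q | exists u : R * R, q = hmul (u.1, 0, u.2) (hdil (f u) (0, 1, 0))].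

(* For an entire graph the rulings are horizontal lines: a ruling of Gamma_f
   is a horizontal line contained in Gamma_f. *)
Definition is_ruling {R : realType} (f : R * R -> R) (L : set (heis R)) : Prop :=
  is_horizontal_line L /\ L `<=` Gamma f.

Definition ruled_graph {R : realType} (f : R * R -> R) : Prop :=
  forall q, Gamma f q -> exists L, is_ruling f L /\ L q.

From HB Require Import structures.
From mathcomp Require Import all_boot all_order all_algebra.
From mathcomp Require Import all_classical all_reals all_analysis.
From mathcomp Require Import ring lra.
Import Order.TTheory GRing.Theory Num.Theory.
Import numFieldNormedType.Exports.
Local Open Scope ring_scope.
Local Open Scope classical_set_scope.

(* Write a point of Gamma_f as u . Y^y with u = (x, 0, w) in V_0, so that the
   surface is the graph y = f (x, w).  Along L_{r,k} the coordinate w is the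
   parabola w(t) = w_r - y_r t - k t^2/2, whose slope -y(t) is read off the
   y-coordinate; hence the projections of two rulings of a graph can only meet
   tangentially.  Take the ruling through the point of Gamma_f above the point
   of L_{p,m} at parameter s.  Compared with the parabolas of L_{p,m1} and
   L_{p,m2}, it gives two quadratics whose roots are all double, so neither
   changes sign; they start with opposite signs (m1 < m < m2) and agree above p,
   so both vanish there.  Tangency above p then forces the ruling to be L_{p,m}
   and the point of L_{p,m} to lie on Gamma_f. *)

Section Quadratics.

Variable R : rcfType.

Lemma quadratic_nonpos_of_tangent_roots (A B C a b : R) :
  (forall t, A * t ^+ 2 + B * t + C = 0 -> 2 * A * t + B = 0) ->
  A * a ^+ 2 + B * a + C < 0 -> A * b ^+ 2 + B * b + C <= 0.
Proof.
move=> tangent qa_lt0; rewrite leNgt; apply/negP => qb_gt0.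
have [A0|A_neq0] := eqVneq A 0.
  subst A; have B_neq0 : B != 0 by apply/eqP => B0; subst B; lra.
  have /tangent : 0 * (- C / B) ^+ 2 + B * (- C / B) + C = 0 by field.
  by rewrite mulr0 mul0r add0r => /eqP; rewrite (negbTE B_neq0).
pose D := B ^+ 2 - 4 * A * C.
have quadE t : 4 * A * (A * t ^+ 2 + B * t + C) = (2 * A * t + B) ^+ 2 - D.
  by rewrite /D; ring.
have D_gt0 : 0 < D.
  have := quadE a; have := quadE b.
  have := sqr_ge0 (2 * A * a + B); have := sqr_ge0 (2 * A * b + B).
  by move: A_neq0; rewrite neq_lt => /orP[A_lt0|A_gt0]; nra.
pose r := (- B + Num.sqrt D) / (2 * A).
have slope_r : 2 * A * r + B = Num.sqrt D by rewrite /r; field; lra.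
have root_r : A * r ^+ 2 + B * r + C = 0.
  have : 4 * A * (A * r ^+ 2 + B * r + C) = 0.
    by rewrite quadE slope_r sqr_sqrtr ?subrr // ltW.
  by move/eqP; rewrite !mulf_eq0 (negbTE A_neq0) orbF => /orP[/eqP|/eqP //]; lra.
by move: (tangent r root_r); rewrite slope_r => /eqP; rewrite sqrtr_eq0 leNgt D_gt0.
Qed.

Lemma quadratic_nonneg_of_tangent_roots (A B C a b : R) :
  (forall t, A * t ^+ 2 + B * t + C = 0 -> 2 * A * t + B = 0) ->
  0 < A * a ^+ 2 + B * a + C -> 0 <= A * b ^+ 2 + B * b + C.
Proof.
move=> tangent qa_gt0.
have : (- A) * b ^+ 2 + (- B) * b + (- C) <= 0.
  apply: (quadratic_nonpos_of_tangent_roots _ _ _ a); last by lra.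
  move=> t qt0; have : 2 * A * t + B = 0 by apply: tangent; lra.
  lra.
lra.
Qed.

(* [w0 - y0 u - k u^2/2] is the w-coordinate of L_{p,k} at parameter u, and
   [w - Y t - m' t^2/2] that of the ruling of slope m' through the point of
   height Y above the point of L_{p,m} at parameter s. *)
Lemma tangent_ruling_height (w0 y0 s m m1 m2 m' w Y : R) :
  m1 < m < m2 -> w = w0 - y0 * s - m * s ^+ 2 / 2 ->
  (forall k, k = m1 \/ k = m2 -> forall t,
     w - Y * t - m' * t ^+ 2 / 2 = w0 - y0 * (s + t) - k * (s + t) ^+ 2 / 2 ->
     Y + m' * t = y0 + k * (s + t)) ->
  Y = y0 + m * s.
Proof.
move=> /andP[lt_m1 lt_m2] wE meet_tangent.
have [s0|s_neq0] := eqVneq s 0.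
  subst s; have := meet_tangent m1 (or_introl erefl) 0; rewrite wE; lra.
pose g (k t : R) := (k - m') / 2 * t ^+ 2 + (y0 + k * s - Y) * t + (k - m) * s ^+ 2 / 2.
have gE (k t : R) : w - Y * t - m' * t ^+ 2 / 2 - (w0 - y0 * (s + t) - k * (s + t) ^+ 2 / 2)
    = g k t by rewrite wE /g; field.
have tangent (k : R) : k = m1 \/ k = m2 ->
    forall t, g k t = 0 -> 2 * ((k - m') / 2) * t + (y0 + k * s - Y) = 0.
  move=> hk t; rewrite -gE => /eqP; rewrite subr_eq0 => /eqP /(meet_tangent k hk t).
  lra.
have s2_gt0 : 0 < s ^+ 2 by rewrite exprn_even_gt0.
have g0E (k : R) : g k 0 = (k - m) * s ^+ 2 / 2 by rewrite /g; field.
have g1_lt0 : g m1 0 < 0.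
  by rewrite g0E pmulr_llt0 ?invr_gt0 // pmulr_llt0 // subr_lt0.
have g2_gt0 : 0 < g m2 0.
  by rewrite g0E pmulr_lgt0 ?invr_gt0 // pmulr_lgt0 // subr_gt0.
have g1_le0 : g m1 (- s) <= 0.
  exact: (quadratic_nonpos_of_tangent_roots _ _ _ 0 _ (tangent m1 (or_introl erefl)) g1_lt0).
have g2_ge0 : 0 <= g m2 (- s).
  exact: (quadratic_nonneg_of_tangent_roots _ _ _ 0 _ (tangent m2 (or_intror erefl)) g2_gt0).
have g1_eq0 : g m1 (- s) = 0.
  have : g m1 (- s) = g m2 (- s) by rewrite -!gE; field.
  lra.
have YE : Y = y0 + m' * s by have := tangent m1 (or_introl erefl) _ g1_eq0; lra.
have /eqP : (m' - m) * s ^+ 2 / 2 = 0 by rewrite -g1_eq0 /g YE; field.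
rewrite !mulf_eq0 invr_eq0 pnatr_eq0 (negbTE s_neq0) !orbF subr_eq0 => /eqP m'E.
by rewrite YE m'E.
Qed.

End Quadratics.

Section RuledGraph.

Set Implicit Arguments.
Unset Strict Implicit.

Variables (R : realType) (f : R * R -> R).

(* The V_0-coordinate of q: q = (hx q, 0, hzV0 q) . Y^(hy q). *)
Definition hzV0 (q : heis R) : R := hz q - hx q * hy q / 2.

Lemma GammaP (q : heis R) : Gamma f q <-> hy q = f (hx q, hzV0 q).
Proof.
rewrite /hzV0; split.
  move=> [[x w] ->]; rewrite /hmul /hdil /hx /hy /hz /=.
  transitivity (f (x, w)); first by ring.
  by congr f; congr pair; field.
move=> hyE; exists (hx q, hzV0 q).
case: q hyE => [[x y] z]; rewrite /hzV0 /hmul /hdil /hx /hy /hz /= => <-.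
by congr (_, _, _); field.
Qed.

Lemma Gamma_above (x w : R) : exists2 q, Gamma f q & (hx q, hzV0 q) = (x, w).
Proof.
exists (hmul (x, 0, w) (hdil (f (x, w)) (0, 1, 0))); first by exists (x, w).
by rewrite /hzV0 /hmul /hdil /hx /hy /hz /=; congr pair; field.
Qed.

Lemma Gamma_LpmP (r : heis R) (k t : R) :
  Gamma f (hmul r (hdil t (1, k, 0))) <->
  hy r + k * t = f (hx r + t, hzV0 r - hy r * t - k * t ^+ 2 / 2).
Proof.
pose q := hmul r (hdil t (1, k, 0)).
have [qx qy qw] : [/\ hx q = hx r + t, hy q = hy r + k * t &
                      hzV0 q = hzV0 r - hy r * t - k * t ^+ 2 / 2].
  by rewrite /q /hzV0 /hmul /hdil /hx /hy /hz /=; split; field.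
by rewrite GammaP qx qy qw.
Qed.

Lemma Lpm_sub_hline (p' r : heis R) (a b : R) : a != 0 ->
  hline p' a b r -> Lpm r (b / a) `<=` hline p' a b.
Proof.
move=> a_neq0 [t0 ->] q [t ->]; exists (t0 + t / a).
case: p' => [[x y] z]; rewrite /hmul /hdil /hx /hy /hz /=.
by congr (_, _, _); field.
Qed.

Lemma has_slope_Lpm_sub (L : set (heis R)) (k : R) (r : heis R) :
  has_slope L k -> L r -> Lpm r k `<=` L.
Proof. by move=> [p' [a [b [a_neq0 [<- ->]]]]]; exact: Lpm_sub_hline. Qed.

(* Along a vertical line both hx and hzV0 are constant, so hy is too. *)
Lemma vertical_line_sub_Gamma (p' : heis R) (b : R) :
  hline p' 0 b `<=` Gamma f -> b = 0.
Proof.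
case: p' => [[x y] z] sub_Gamma.
have hyE t : y + t * b = f (x, z - x * y / 2).
  have /GammaP := sub_Gamma _ (ex_intro _ t erefl).
  rewrite /hzV0 /hmul /hdil /hx /hy /hz /= => ->.
  by congr f; congr pair; field.
by have := hyE 0; have := hyE 1; lra.
Qed.

Lemma ruling_Lpm_sub (L : set (heis R)) (r : heis R) :
  is_ruling f L -> L r -> exists m', Lpm r m' `<=` Gamma f.
Proof.
move=> [[p' [a [b [ab_neq0 ->]]]] sub_Gamma] Lr.
have a_neq0 : a != 0.
  apply/eqP => a0; subst a; move: ab_neq0.
  by rewrite (vertical_line_sub_Gamma sub_Gamma) eqxx; case.
by exists (b / a) => q /(Lpm_sub_hline a_neq0 Lr) /sub_Gamma.
Qed.

Lemma Lpm_sub_Gamma_between (p : heis R) (m1 m2 m : R) :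
  ruled_graph f -> Lpm p m1 `<=` Gamma f -> Lpm p m2 `<=` Gamma f ->
  m1 < m < m2 -> Lpm p m `<=` Gamma f.
Proof.
move=> ruled Gamma1 Gamma2 m_between _ [s ->]; apply/Gamma_LpmP.
have [q Gamma_q [qx qw]] :=
  Gamma_above (hx p + s) (hzV0 p - hy p * s - m * s ^+ 2 / 2).
have [L [ruling_L Lq]] := ruled q Gamma_q.
have [m' Gamma'] := ruling_Lpm_sub ruling_L Lq.
rewrite -qx -qw -(GammaP q).1 //; apply/esym.
apply: (tangent_ruling_height _ _ _ _ _ _ _ m' _ _ m_between qw) => k hk t meet.
have Gamma_k : Gamma f (hmul p (hdil (s + t) (1, k, 0))).
  by case: hk => ->; [apply: Gamma1 | apply: Gamma2]; exists (s + t).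
have Gamma_t : Gamma f (hmul q (hdil t (1, m', 0))) by apply: Gamma'; exists t.
move/Gamma_LpmP: Gamma_k => ->; move/Gamma_LpmP: Gamma_t => ->.
by rewrite qx -addrA meet.
Qed.

End RuledGraph.

Theorem lemma4p3 (R : realType) (f : R * R -> R) (R1 R2 : set (heis R))
    (m1 m2 : R) (p : heis R) :
  continuous f -> ruled_graph f ->
  is_ruling f R1 -> is_ruling f R2 -> R1 <> R2 ->
  R1 p -> R2 p ->
  has_slope R1 m1 -> has_slope R2 m2 -> m1 < m2 ->
  forall m : R, m1 <= m <= m2 -> is_ruling f (Lpm p m).
Proof.
move=> _ ruled [_ Gamma1] [_ Gamma2] _ R1p R2p slope1 slope2 _ m /andP[le_m1 le_m2].
have Lpm1 : Lpm p m1 `<=` Gamma f := subset_trans (has_slope_Lpm_sub slope1 R1p) Gamma1.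
have Lpm2 : Lpm p m2 `<=` Gamma f := subset_trans (has_slope_Lpm_sub slope2 R2p) Gamma2.
split; first by exists p, 1, m; split; [left; exact: oner_neq0|].
have [->|m_neq1] := eqVneq m m1; first exact: Lpm1.
have [->|m_neq2] := eqVneq m m2; first exact: Lpm2.
apply: (Lpm_sub_Gamma_between ruled Lpm1 Lpm2).
by rewrite !lt_neqAle eq_sym m_neq1 m_neq2 le_m1 le_m2.
Qed.
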